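(* For every $\varepsilon>0$ the following holds. Let $F$ be a fixed connected $r$-graph and let $D$ be its diameter. For the class consisting of all input $r$-graphs $G$ on $n$ vertices with average degree $d$ and maximum degree $\Delta(G)=O(d)$, there exists an $\varepsilon$-tester for $F$-freeness with $O_\varepsilon(d^{D+1})$ queries.
   Context: A path between $u$ and $v$ in an $r$-graph is a sequence of edges whose vertices admit a labelling $u,v_1,\dots,v_k,v$ with consecutive vertices lying in a common edge and each edge consisting of consecutive vertices; its length is its number of edges. The distance between two vertices is the minimum length of such a path, and the diameter is the maximum distance over vertex pairs. Testing model: the input $r$-graph $G$ with $m$ edges has a fixed ordering of the edges at each vertex; queries are vertex-set queries (is a given $r$-set an edge?) and neighbour queries (the $i$-th edge at vertex $v$). $G$ is $\varepsilon$-far from $F$-free if at least $\varepsilon m$ edges must be added or deleted to make it contain no copy of $F$. A tester accepts $F$-free inputs with probability at least $2/3$ and rejects inputs that are far (w.r.t. the given distance parameter) with probability at least $2/3$; an $\varepsilon$-tester is a tester valid for all distance parameters $\varepsilon'\ge\varepsilon$. $O_\varepsilon$ means the implicit constant may depend on $\varepsilon$ (and $F$) but not on $n$. *)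

From HB Require Import structures.
From mathcomp Require Import all_boot all_order all_algebra.
From mathcomp Require Import reals.
Set Implicit Arguments.
Unset Strict Implicit.
Unset Printing Implicit Defensive.
Import Order.TTheory GRing.Theory Num.Theory.

Definition is_rgraph (r n : nat) (E : {set {set 'I_n}}) : Prop :=
  forall e, e \in E -> #|e| = r.

Definition vdeg (n : nat) (E : {set {set 'I_n}}) (v : 'I_n) : nat :=
  #|[set e in E | v \in e]|.

Definition contains_copy (k n : nat) (F : {set {set 'I_k}})
    (E : {set {set 'I_n}}) : Prop :=
  exists f : 'I_k -> 'I_n, injective f /\ forall e, e \in F -> f @: e \in E.

Definition F_free (k n : nat) (F : {set {set 'I_k}}) (E : {set {set 'I_n}}) :=
  ~ contains_copy F E.

(* A path of length l from u to v in F: a sequence of l edges of F together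
   with a labelling u = s_0, s_1, ..., s_t = v of (distinct) vertices such that
   each edge of the path is the set of a block of consecutive labels, and any
   two consecutive labels lie in a common edge of the path. *)
Definition hpath (k : nat) (F : {set {set 'I_k}}) (u v : 'I_k) (l : nat) :
    Prop :=
  exists (s : seq 'I_k) (es : seq {set 'I_k}),
    [/\ uniq (u :: s), last u s = v, size es = l,
        (forall e, e \in es -> e \in F) /\
        (forall e, e \in es ->
           exists i j, e = [set x | x \in take j (drop i (u :: s))]) &
        (forall i, i.+1 < size (u :: s) ->
           exists2 e, e \in es &
             (nth u (u :: s) i \in e) && (nth u (u :: s) i.+1 \in e))].

Definition hdist_is (k : nat) (F : {set {set 'I_k}}) (u v : 'I_k) (l : nat) :=
  hpath F u v l /\ forall l', l' < l -> ~ hpath F u v l'.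

Definition hconnected (k : nat) (F : {set {set 'I_k}}) : Prop :=
  forall u v : 'I_k, exists l, hpath F u v l.

Definition is_diameter (k : nat) (F : {set {set 'I_k}}) (D : nat) : Prop :=
  (forall u v : 'I_k, exists2 l, l <= D & hpath F u v l) /\
  (exists u v : 'I_k, hdist_is F u v D).

(* A randomized adaptive query algorithm on inputs with vertex set 'I_n:
   a finite tree whose internal nodes are fair coin flips, vertex-set queries
   ("is S an edge?") and neighbour queries ("the i-th edge at v", answered by
   None if v has at most i edges), and whose leaves are accept/reject. *)
Inductive qtree (n : nat) : Type :=
  | QOut of bool
  | QCoin of (bool -> qtree n)
  | QSet of {set 'I_n} & (bool -> qtree n)
  | QNbr of 'I_n & nat & (option {set 'I_n} -> qtree n).

Fixpoint nqueries (n : nat) (t : qtree n) : nat :=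
  match t with
  | QOut _ => 0
  | QCoin c => maxn (nqueries (c true)) (nqueries (c false))
  | QSet _ c => (maxn (nqueries (c true)) (nqueries (c false))).+1
  | QNbr _ _ c => (\max_(a : option {set 'I_n}) nqueries (c a)).+1
  end.

Definition edge_order (n : nat) (E : {set {set 'I_n}})
    (ord : 'I_n -> seq {set 'I_n}) : Prop :=
  forall v, uniq (ord v) /\ forall e, (e \in ord v) = (e \in E) && (v \in e).

Definition nbr_answer (n : nat) (ord : 'I_n -> seq {set 'I_n}) (v : 'I_n)
    (i : nat) : option {set 'I_n} :=
  if i < size (ord v) then Some (nth set0 (ord v) i) else None.

Fixpoint accept_prob (R : realType) (n : nat) (E : {set {set 'I_n}})
    (ord : 'I_n -> seq {set 'I_n}) (t : qtree n) : R :=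
  match t with
  | QOut b => if b then 1%R else 0%R
  | QCoin c => ((@accept_prob R n E ord (c true) + @accept_prob R n E ord (c false)) / 2)%R
  | QSet A c => @accept_prob R n E ord (c (A \in E))
  | QNbr v i c => @accept_prob R n E ord (c (nbr_answer ord v i))
  end.

Definition avg_degree (R : realType) (r n : nat) (E : {set {set 'I_n}}) : R :=
  ((r * #|E|)%:R / n%:R)%R.

Definition far_from_free (R : realType) (r k n : nat) (F : {set {set 'I_k}})
    (E : {set {set 'I_n}}) (eps : R) : Prop :=
  forall H : {set {set 'I_n}}, is_rgraph r H -> F_free F H ->
    (eps * #|E|%:R <= #|(E :\: H) :|: (H :\: E)|%:R)%R.

From HB Require Import structures.
From mathcomp Require Import all_boot all_order all_algebra.
From mathcomp Require Import reals.
From mathcomp Require Import lra ring zify.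
Import Order.TTheory GRing.Theory Num.Theory.

(* The tester runs s = O(1/eps) rounds; a round samples a vertex v
   and, following only the first floor(C d) edges at every vertex, explores all
   edges within D + 1 hops of v, which costs O((C d (1 + r))^(D+1)) neighbour
   queries; it rejects if the explored edges contain a copy of F.  F-free inputs
   are never rejected.  Call v bad if the exploration from v finds a copy.  Any
   copy f of F is found from f x0, because every edge of F lies within D hops of
   x0; hence deleting the at most |B| C d edges touching the bad set B leaves an
   F-free graph.  If G is eps-far this gives eps m <= |B| C d, i.e.
   |B| >= eps n / (C r) since d n = r m, and s rounds all miss B with
   probability at most 1/3. *)

Set Implicit Arguments.
Unset Strict Implicit.
Unset Printing Implicit Defensive.

Section QueryCombinators.
Variable n : nat.
Local Notation edge := {set 'I_n}.

Fixpoint qflatten_map (X : Type) (l : seq X)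
    (c : X -> (seq edge -> qtree n) -> qtree n) (k : seq edge -> qtree n) :
    qtree n :=
  match l with
  | [::] => k [::]
  | x :: l' => c x (fun es => qflatten_map l' c (fun es' => k (es ++ es')))
  end.

Lemma nqueries_qflatten_map (X : Type) (l : seq X) c q :
  (forall x k B, (forall a, nqueries (k a) <= B) -> nqueries (c x k) <= q + B) ->
  forall k B, (forall a, nqueries (k a) <= B) ->
  nqueries (qflatten_map l c k) <= size l * q + B.
Proof.
move=> hc; elim: l => [|x l IH] k B hk /=; first exact: hk.
rewrite mulSn -addnA; apply: hc => es; exact: IH.
Qed.

Fixpoint qsample (N : nat) (k : nat -> qtree n) : qtree n :=
  if N is N'.+1 then QCoin (fun b : bool => qsample N' (fun x => k (x + b * 2 ^ N')))
  else k 0.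

Lemma nqueries_qsample N k B :
  (forall x, nqueries (k x) <= B) -> nqueries (qsample N k) <= B.
Proof. by elim: N k => [|N IH] k hk //=; rewrite geq_max !IH. Qed.

Variables (R : realType) (E : {set edge}) (ord : 'I_n -> seq edge).
Local Notation accept := (accept_prob R E ord).
Local Open Scope ring_scope.

Lemma accept_prob_qflatten_map (X : Type) (l : seq X) c cv :
  (forall x k, accept (c x k) = accept (k (cv x))) ->
  forall k, accept (qflatten_map l c k) = accept (k (flatten (map cv l))).
Proof. by move=> hc; elim: l => [|x l IH] k //=; rewrite hc IH. Qed.

Lemma accept_prob_qsample N k :
  accept (qsample N k) = (\sum_(0 <= x < 2 ^ N) accept (k x)) / (2 ^ N)%:R.
Proof.
elim: N k => [|N IH] k /=; first by rewrite expn0 big_nat1 divr1.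
have h2N : (2 ^ N.+1 = 2 ^ N + 2 ^ N)%N by rewrite expnS mul2n addnn.
have shift : \sum_(2 ^ N <= x < 2 ^ N + 2 ^ N) accept (k x) =
             \sum_(0 <= x < 2 ^ N) accept (k (x + 2 ^ N)%N).
  by rewrite -{1}[(2 ^ N)%N]add0n big_addn addnK.
rewrite !IH h2N (big_cat_nat _ (leq_addr _ _)) //= shift.
under eq_bigr do rewrite mul1n.
under [X in (_ + X / _) / 2 = _]eq_bigr do rewrite mul0n addn0.
have hN : 0 < (2 ^ N)%:R :> R by rewrite ltr0n expn_gt0.
by rewrite natrD; field; rewrite !gt_eqF ?addr_gt0.
Qed.

End QueryCombinators.

Section Exploration.
Variables (n Dl r : nat).
Local Notation edge := {set 'I_n}.

(* [take r] keeps the query count independent of the input; on r-graphs it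
   lists every vertex of the edge. *)
Fixpoint explore (t : nat) (v : 'I_n) (k : seq edge -> qtree n) : qtree n :=
  if t is t'.+1 then
    qflatten_map (iota 0 Dl) (fun i k1 => QNbr v i (fun a =>
      if a is Some e
      then qflatten_map (take r (enum e)) (explore t') (fun es => k1 (e :: es))
      else k1 [::])) k
  else k [::].

Fixpoint explore_cost (t : nat) : nat :=
  if t is t'.+1 then Dl * (1 + r * explore_cost t') else 0.

Lemma nqueries_explore t v k B :
  (forall es, nqueries (k es) <= B) -> nqueries (explore t v k) <= explore_cost t + B.
Proof.
elim: t v k B => [|t IH] v k B hk /=; first exact: hk.
rewrite -[Dl in Dl * _](size_iota 0).
apply: nqueries_qflatten_map => // i k1 B1 hk1.
rewrite [nqueries _]/= add1n addSn ltnS; apply/bigmax_leqP => -[e|] _; last first.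
  exact: leq_trans (hk1 _) (leq_addl _ _).
apply: leq_trans (nqueries_qflatten_map _ IH (fun es => hk1 (e :: es))) _.
by rewrite leq_add2r leq_mul2r size_take_min geq_minl orbT.
Qed.

Lemma explore_cost_le t : explore_cost t <= t * (Dl * (1 + r)) ^ t.
Proof.
elim: t => [|t IH] //=.
have hDl : Dl <= (Dl * (1 + r)) ^ t.+1.
  case: Dl => [|Dl'] //.
  by rewrite expnS -mulnA leq_pmulr // muln_gt0 expn_gt0 muln_gt0.
move: hDl IH; rewrite expnS.
set X := (Dl * (1 + r)) ^ t; set Q := explore_cost t => hDl IH.
have h : Dl * r * Q <= Dl * r * (t * X) by rewrite leq_mul2l IH orbT.
nia.
Qed.

Variable ord : 'I_n -> seq edge.

Fixpoint explored (t : nat) (v : 'I_n) : seq edge :=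
  if t is t'.+1 then
    flatten [seq if nbr_answer ord v i is Some e
                 then e :: flatten (map (explored t') (take r (enum e)))
                 else [::] | i <- iota 0 Dl]
  else [::].

Lemma accept_prob_explore (R : realType) (E : {set edge}) t v k :
  accept_prob R E ord (explore t v k) = accept_prob R E ord (k (explored t v)).
Proof.
elim: t v k => [|t IH] v k //=.
apply: accept_prob_qflatten_map => i k1 /=.
by case: (nbr_answer ord v i) => [e|] //; apply: accept_prob_qflatten_map.
Qed.

Variable E : {set edge}.
Hypotheses (hord : edge_order E ord) (hE : is_rgraph r E)
  (hdeg : forall v, vdeg E v <= Dl).

Lemma explored_sub t v : {subset explored t v <= E}.
Proof.
elim: t v => [|t IH] v e //= /flatten_mapP [i _].
rewrite /nbr_answer; case: ifP => // hi; rewrite inE => /orP [/eqP -> | ].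
  by have [_ hm] := hord v; move: (mem_nth set0 hi); rewrite hm => /andP[].
by case/flatten_mapP => w _; apply: IH.
Qed.

Lemma explored_mono t t' v : t <= t' -> {subset explored t v <= explored t' v}.
Proof.
elim: t t' v => [|t IH] [|t'] v //= htt' e /flatten_mapP [i hi he].
apply/flatten_mapP; exists i => //; case: (nbr_answer ord v i) he => // e'.
rewrite !inE => /orP [-> //| /flatten_mapP [w hw he]].
by apply/orP; right; apply/flatten_mapP; exists w => //; apply: IH he.
Qed.

Lemma nbr_answer_edge e v : e \in E -> v \in e ->
  exists2 i, i \in iota 0 Dl & nbr_answer ord v i = Some e.
Proof.
move=> heE hv; have [huniq hm] := hord v.
have ein : e \in ord v by rewrite hm heE.
have size_ord : size (ord v) = vdeg E v.
  by rewrite /vdeg -(card_uniqP huniq); apply: eq_card => e'; rewrite inE hm.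
exists (index e (ord v)); last by rewrite /nbr_answer index_mem ein nth_index.
by rewrite mem_iota add0n (leq_trans _ (hdeg v)) // -size_ord index_mem.
Qed.

Lemma explored_edge t e v : e \in E -> v \in e -> e \in explored t.+1 v.
Proof.
move=> heE hv; have [i hi ha] := nbr_answer_edge heE hv.
by apply/flatten_mapP; exists i => //; rewrite ha mem_head.
Qed.

Lemma explored_step t e v w : e \in E -> v \in e -> w \in e ->
  {subset explored t w <= explored t.+1 v}.
Proof.
move=> heE hv hw x hx; have [i hi ha] := nbr_answer_edge heE hv.
apply/flatten_mapP; exists i => //; rewrite ha inE; apply/orP; right.
apply/flatten_mapP; exists w => //.
by rewrite take_oversize ?mem_enum // -cardE (hE heE).
Qed.

End Exploration.

Lemma split_last_has (T : Type) (P : pred T) (w : seq T) : has P w ->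
  exists w1 y w2, [/\ w = w1 ++ y :: w2, P y & ~~ has P w2].
Proof.
elim/last_ind: w => [|w z IH] //; rewrite -cats1 has_cat /= orbF.
have [hz _ | hz] := boolP (P z); first by exists w, z, [::].
rewrite orbF => /IH [w1 [y [w2 [-> hy hw2]]]].
by exists w1, y, (w2 ++ [:: z]); rewrite -catA has_cat /= (negbTE hz) !orbF.
Qed.

Section Shortcut.
Variable k : nat.
Local Notation edge := {set 'I_k}.

Definition hadj (A : {set edge}) : rel 'I_k :=
  fun x y => [exists e in A, (x \in e) && (y \in e)].

Lemma hadj_sub (A B : {set edge}) : A \subset B -> subrel (hadj A) (hadj B).
Proof.
move=> sAB x y /exists_inP [e he hxy]; apply/exists_inP; exists e => //.
exact: (subsetP sAB).
Qed.

Lemma path_hadj_setD1 (A : {set edge}) (e : edge) y t :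
  path (hadj A) y t -> ~~ has [in e] t -> path (hadj (A :\ e)) y t.
Proof.
elim: t y => //= z t IH y /andP [/exists_inP [e' he' /andP [hy hz]] hp].
case/norP => hze ht; rewrite IH // andbT; apply/exists_inP; exists e'.
  by rewrite !inE he' andbT; apply: contraNneq hze => <-.
by rewrite hy hz.
Qed.

(* Greedy shortcut: from the current vertex jump, inside an edge covering the
   next step, to the last vertex of the walk in that edge. *)
Lemma hadj_path_shortcut (A : {set edge}) (a : 'I_k) (t : seq 'I_k) :
  path (hadj A) a t ->
  exists p, [/\ size p <= #|A|, path (hadj A) a p & last a p = last a t].
Proof.
move: {2}#|A| (leqnn #|A|) => m.
elim: m A a t => [|m IH] A a [|b t] hA hp; try by exists [::].
  case/andP: hp => /exists_inP [e he _].
  by move: hA; rewrite leqn0 cards_eq0 => /eqP A0; rewrite A0 inE in he.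
have [e he /andP [ha hb]] := exists_inP (andP hp).1.
have /split_last_has [t1 [y [t2 [ht hy ht2]]]] : has [in e] (b :: t) by rewrite /= hb.
have hyt2 : path (hadj (A :\ e)) y t2.
  by apply: path_hadj_setD1 ht2; move: hp; rewrite ht cat_path => /andP [_ /andP []].
have hAe : #|A| = #|A :\ e|.+1 by rewrite (cardsD1 e) he.
have [|p [hsz hpath hlast]] := IH _ _ _ _ hyt2; first by rewrite -ltnS -hAe.
exists (y :: p); split; first by rewrite hAe.
  rewrite /= (sub_path (hadj_sub (subD1set A e)) hpath) andbT.
  by apply/exists_inP; exists e; rewrite ?ha.
by rewrite /= hlast -[last b t]/(last a (b :: t)) ht last_cat.
Qed.

Lemma hpath_hadj_path (F : {set edge}) u v l : hpath F u v l ->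
  exists p, [/\ size p <= l, path (hadj F) u p & last u p = v].
Proof.
case=> s [es [_ <- <- [esF _] hcov]].
have hA : path (hadj [set e in es]) u s.
  apply/(pathP u) => i hi; have [e he hi'] := hcov i hi.
  by apply/exists_inP; exists e; rewrite ?inE.
have [p [hsz hp hlast]] := hadj_path_shortcut hA.
exists p; split => //; first by rewrite (leq_trans hsz) // cardsE card_size.
apply: sub_path hp; apply: hadj_sub; apply/subsetP => e; rewrite inE; exact: esF.
Qed.

End Shortcut.

Section Copies.
Variables (k n : nat) (F : {set {set 'I_k}}).

Definition contains_copyb (G : {set {set 'I_n}}) : bool :=
  [exists f : {ffun 'I_k -> 'I_n}, injectiveb f && [forall e in F, f @: e \in G]].

Lemma contains_copyP G : reflect (contains_copy F G) (contains_copyb G).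
Proof.
apply: (iffP existsP) => [[f /andP [/injectiveP hi /forall_inP hf]] | [f [hi hf]]].
  by exists f.
exists [ffun x => f x]; apply/andP; split.
  by apply/injectiveP => x y; rewrite !ffunE; apply: hi.
by apply/forall_inP => e he; rewrite (eq_imset _ (ffunE _)) hf.
Qed.

Lemma contains_copy_sub (G H : {set {set 'I_n}}) :
  G \subset H -> contains_copy F G -> contains_copy F H.
Proof. by move=> /subsetP sGH [f [hi hf]]; exists f; split=> // e /hf /sGH. Qed.

Variables (Dl r D : nat) (E : {set {set 'I_n}}) (ord : 'I_n -> seq {set 'I_n}).
Hypotheses (hord : edge_order E ord) (hE : is_rgraph r E)
  (hdeg : forall v, vdeg E v <= Dl).

Definition explored_set (v : 'I_n) : {set {set 'I_n}} :=
  [set e in explored Dl r ord D.+1 v].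

Lemma explored_set_sub v : explored_set v \subset E.
Proof. by apply/subsetP => e; rewrite inE; apply: explored_sub. Qed.

Lemma explored_hadj_path (f : 'I_k -> 'I_n) : (forall e, e \in F -> f @: e \in E) ->
  forall p u t, path (hadj F) u p ->
  {subset explored Dl r ord t (f (last u p)) <= explored Dl r ord (t + size p) (f u)}.
Proof.
move=> hf; elim=> [|y p IH] u t /=; first by move=> x; rewrite addn0.
case/andP => /exists_inP [e he /andP [hu hy]] hp x /(IH _ _ hp) hx.
rewrite addnS; apply: (explored_step hord hE hdeg (hf _ he)) hx; exact: imset_f.
Qed.

Hypotheses (hr : 0 < r) (hF : is_rgraph r F)
  (hdiam : forall u v : 'I_k, exists2 l, l <= D & hpath F u v l).

(* Every edge of F contains a vertex at most D hops from x0, so its image is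
   explored at depth D + 1 from f x0. *)
Lemma contains_copy_explored_set (f : 'I_k -> 'I_n) x0 : injective f ->
  (forall e, e \in F -> f @: e \in E) -> contains_copyb (explored_set (f x0)).
Proof.
move=> hi hf; apply/contains_copyP; exists f; split => // e he.
have /set0Pn [w hw] : e != set0 by rewrite -card_gt0 (hF he).
have [l hl /hpath_hadj_path [p [hsz hp hlast]]] := hdiam x0 w.
have hw1 : f @: e \in explored Dl r ord 1 (f w).
  exact: (explored_edge _ hord hdeg _ (hf _ he) (imset_f f hw)).
have := explored_hadj_path hf hp; rewrite hlast => /(_ _ _ hw1).
rewrite inE; apply: explored_mono.
by rewrite add1n ltnS (leq_trans hsz hl).
Qed.

End Copies.

Lemma sum_insub_mem n (B : {set 'I_n}) M : n <= M ->
  \sum_(0 <= x < M) (if insub x is Some v then v \in B else false : nat) = #|B|.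
Proof.
move=> hM; rewrite (@big_cat_nat _ _ _ n) //= [X in _ + X]big1_seq ?addn0.
  by rewrite big_mkord -sum1_card [RHS]big_mkcond; apply: eq_bigr => i _; rewrite valK.
move=> x /andP [_]; rewrite mem_index_iota => /andP [hx _].
by rewrite insubF // ltnNge hx.
Qed.

Section Tester.
Variables (n Dl r k D N : nat) (F : {set {set 'I_k}}).

(* Only fair coins are available, so a vertex is drawn as a uniform x < 2 ^ N;
   a draw x >= n passes the round. *)
Definition trial (cont : qtree n) : qtree n :=
  qsample N (fun x => if insub x is Some v then
      explore Dl r D.+1 v (fun es =>
        if contains_copyb F [set e in es] then QOut n false else cont)
    else cont).

Definition tester (s : nat) : qtree n := iter s trial (QOut n true).

Lemma nqueries_tester s : nqueries (tester s) <= s * explore_cost Dl r D.+1.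
Proof.
elim: s => [|s IH] //=; rewrite mulSn.
apply: nqueries_qsample => x; case: (insub x) => [v|]; last first.
  exact: leq_trans IH (leq_addl _ _).
by apply: nqueries_explore => es; case: ifP.
Qed.

Definition bad_vertices (ord : 'I_n -> seq {set 'I_n}) : {set 'I_n} :=
  [set v | contains_copyb F (explored_set Dl r D ord v)].

Variables (R : realType) (E : {set {set 'I_n}}) (ord : 'I_n -> seq {set 'I_n}).
Local Open Scope ring_scope.

Lemma accept_prob_tester s : (n <= 2 ^ N)%N ->
  accept_prob R E ord (tester s) = (1 - #|bad_vertices ord|%:R / (2 ^ N)%:R) ^+ s.
Proof.
move=> hn; elim: s => [|s IH] /=; first by rewrite expr0.
rewrite exprSr -IH accept_prob_qsample.
set a := accept_prob R E ord (tester s).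
rewrite (eq_bigr (fun x =>
  a - a * (if insub x is Some v then v \in bad_vertices ord else false : nat)%:R)); last first.
  move=> x _; case: (insub x) => [v|]; last by rewrite mulr0 subr0.
  rewrite accept_prob_explore inE /explored_set.
  by case: ifP => _ /=; rewrite ?mulr1 ?subrr ?mulr0 ?subr0.
rewrite sumrB -mulr_sumr -natr_sum sum_insub_mem // sumr_const_nat subn0 mulr_natr.
have hN : 0 < (2 ^ N)%:R :> R by rewrite ltr0n expn_gt0.
by field; rewrite gt_eqF.
Qed.

End Tester.

Lemma hconnected_edgeless k (F : {set {set 'I_k}}) :
  hconnected F -> F = set0 -> forall x y : 'I_k, x = y.
Proof.
move=> hconn F0 x y; have [l [[|z s] [es [_ <- _ [esF _] hcov]]]] := hconn x y => //.
by have [e /esF] := hcov 0%N isT; rewrite F0 inE.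
Qed.

Lemma card_touching_le n (E : {set {set 'I_n}}) (B : {set 'I_n}) :
  #|[set e in E | ~~ [disjoint e & B]]| <= \sum_(v in B) vdeg E v.
Proof.
rewrite -sum1_card; apply: (@leq_trans (\sum_(e in [set e in E | ~~ [disjoint e & B]])
    \sum_(v in B) (v \in e : nat))).
  apply: leq_sum => e; rewrite inE => /andP [_ /pred0Pn [v /andP [hv hb]]].
  by rewrite (bigD1 v) //= [v \in e]hv.
rewrite exchange_big /=; apply: leq_sum => v _.
rewrite -big_mkcondr /= sum1_card /vdeg; apply: subset_leq_card.
by apply/subsetP => e; rewrite [in X in X -> _]unfold_in !inE => /andP [/andP [-> _] ->].
Qed.

Lemma avg_degree_gt0 (R : realType) r n (E : {set {set 'I_n}}) :
  (0 < avg_degree R r E)%R ->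
  [/\ (0 < n)%N, (0 < #|E|)%N & (avg_degree R r E * n%:R = (r * #|E|)%:R)%R].
Proof.
rewrite /avg_degree => hd.
have hn : (n%:R != 0 :> R)%R by apply: contraTneq hd => ->; rewrite invr0 mulr0 ltxx.
split; last by rewrite mulfVK.
  by rewrite lt0n; apply: contraNneq hn => ->.
by rewrite lt0n; apply: contraTneq hd => ->; rewrite muln0 mul0r ltxx.
Qed.

Section BadVertices.
Variables (n Dl r k D : nat) (F : {set {set 'I_k}}).
Variables (E : {set {set 'I_n}}) (ord : 'I_n -> seq {set 'I_n}).
Hypotheses (hord : edge_order E ord) (hE : is_rgraph r E)
  (hdeg : forall v, vdeg E v <= Dl).

Local Notation B := (bad_vertices Dl r D F ord).

Lemma bad_vertices_free : F_free F E -> B = set0.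
Proof.
move=> hfree; apply/setP => v; rewrite !inE; apply/negbTE/contains_copyP => hc.
exact: (hfree (contains_copy_sub (explored_set_sub Dl r D hord v) hc)).
Qed.

Hypotheses (hr : 0 < r) (hF : is_rgraph r F)
  (hdiam : forall u v : 'I_k, exists2 l, l <= D & hpath F u v l).

(* Deleting the edges that touch a bad vertex leaves an F-free graph: a
   surviving copy would have a bad vertex in its edge through x0. *)
Lemma far_touching_bad (R : realType) (eps : R) : F != set0 ->
  far_from_free r F E eps ->
  (eps * #|E|%:R <= #|[set e in E | ~~ [disjoint e & B]]|%:R)%R.
Proof.
case/set0Pn => e0 he0 hfar.
have /set0Pn [x0 hx0] : e0 != set0 by rewrite -card_gt0 (hF he0).
pose H := [set e in E | [disjoint e & B]].
have hH : is_rgraph r H by move=> e; rewrite inE => /andP [/hE].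
have hHfree : F_free F H.
  case=> g [gi gH].
  have gE e : e \in F -> g @: e \in E by move/gH; rewrite inE => /andP [].
  have hgB : g x0 \in B.
    by rewrite inE (contains_copy_explored_set hord hE hdeg hr hF hdiam x0 gi gE).
  have := gH _ he0; rewrite inE => /andP [_ /disjointFr /(_ (imset_f g hx0))].
  by rewrite hgB.
have -> : [set e in E | ~~ [disjoint e & B]] = (E :\: H) :|: (H :\: E).
  by apply/setP => e; rewrite !inE; case: (e \in E); case: [disjoint _ & _].
exact: hfar.
Qed.

Lemma bad_vertices_edgeless : F = set0 -> (forall x y : 'I_k, x = y) -> B = setT.
Proof.
move=> F0 hk; apply/setP => v; rewrite !inE; apply/contains_copyP.
exists (fun _ => v); split; first by move=> x y _; apply: hk.
by move=> e; rewrite F0 inE.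
Qed.

Hypothesis hconn : hconnected F.
Local Open Scope ring_scope.

Lemma bad_vertices_dense (R : realType) (eps eps' C : R) :
  0 <= eps -> eps <= eps' -> 0 <= C -> 0 < avg_degree R r E ->
  (forall v, (vdeg E v)%:R <= C * avg_degree R r E) -> far_from_free r F E eps' ->
  eps * n%:R <= #|B|%:R * (C * r%:R + eps).
Proof.
move=> eps0 heps hC /avg_degree_gt0 [_ hm havg] hdegC hfar.
set d := avg_degree R r E in havg hdegC.
have [F0|FN0] := eqVneq F set0.
  rewrite (bad_vertices_edgeless F0 (hconnected_edgeless hconn F0)) cardsT card_ord.
  by rewrite mulrC ler_wpM2l // lerDr mulr_ge0.
have touch : eps * #|E|%:R <= #|B|%:R * (C * d).
  apply: le_trans (ler_wpM2r (ler0n _ _) heps) _.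
  apply: le_trans (far_touching_bad FN0 hfar) _.
  apply: le_trans (_ : (\sum_(v in B) vdeg E v)%:R <= _).
    by rewrite ler_nat card_touching_le.
  by rewrite natr_sum mulr_natl -sumr_const; apply: ler_sum => v _.
have : eps * n%:R * #|E|%:R <= #|B|%:R * (C * r%:R) * #|E|%:R.
  have -> : #|B|%:R * (C * r%:R) * #|E|%:R = #|B|%:R * (C * d) * n%:R.
    transitivity (#|B|%:R * C * (r * #|E|)%:R); first by rewrite natrM; ring.
    by rewrite -havg; ring.
  by rewrite mulrAC ler_wpM2r.
rewrite ler_pM2r ?ltr0n // => /le_trans; apply.
by rewrite ler_wpM2l // lerDl.
Qed.

End BadVertices.

Section Numerics.
Variable R : realFieldType.
Local Open Scope ring_scope.

Lemma one_sub_pow_mul_le1 (q : R) s : 0 <= q <= 1 -> (1 - q) ^+ s * (1 + s%:R * q) <= 1.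
Proof.
case/andP => q0 q1; elim: s => [|s IH]; first by rewrite expr0 mul0r addr0 mul1r.
rewrite exprSr -natr1.
have hX : 0 <= (1 - q) ^+ s by apply: exprn_ge0; lra.
set X := (1 - q) ^+ s in IH hX *.
have h : 0 <= X * (q * q) * (s%:R + 1) by rewrite !mulr_ge0 ?addr_ge0 ?mulr_ge0.
nra.
Qed.

Lemma one_sub_pow_le_third (q : R) s :
  0 <= q <= 1 -> 2 < s%:R * q -> (1 - q) ^+ s <= 1 / 3%:R.
Proof.
move=> hq hsq; have := one_sub_pow_mul_le1 s hq.
have hX : 0 <= (1 - q) ^+ s by apply: exprn_ge0; case/andP: hq => _; lra.
set X := (1 - q) ^+ s in hX * => h.
have : 0 <= X * (s%:R * q - 2) by apply: mulr_ge0 => //; lra.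
rewrite ler_pdivlMr ?ltr0n // -[3%:R]/(3 : R).
nra.
Qed.

(* [+ eps] in the denominator caps the fraction at 1/2, which covers the case
   where every vertex is bad. *)
Lemma sample_fraction_ge (eps c b n M : R) :
  0 < eps -> 0 <= c -> 0 < M -> M <= 2 * n -> eps * n <= b * (c + eps) -> eps / (2 * (c + eps)) <= b / M.
Proof.
move=> eps0 c0 M0 hM hn.
rewrite ler_pdivrMr ?mulr_gt0 ?ltr_wpDl // mulrAC ler_pdivlMr //.
by apply: le_trans (ler_wpM2l (ltW eps0) hM) _; lra.
Qed.

End Numerics.

Local Open Scope ring_scope.

Lemma truncnS_div_mul_gt (R : realType) (a p : R) :
  0 < p -> a < (Num.truncn (a / p)).+1%:R * p.
Proof. by move=> hp; have := truncnS_gt (a / p); rewrite ltr_pdivrMr. Qed.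

Lemma nqueries_tester_le (R : realType) n r k D N (F : {set {set 'I_k}}) s (C d : R) :
  0 <= C -> 0 <= d ->
  (nqueries (tester n (Num.truncn (C * d)) r D N F s))%:R <=
  (s * D.+1 * (1 + r) ^ D.+1)%N%:R * C ^+ D.+1 * d ^+ D.+1.
Proof.
move=> hC hd; set Dl := Num.truncn (C * d).
have hDl : Dl%:R ^+ D.+1 <= (C * d) ^+ D.+1 :> R.
  by rewrite lerXn2r ?nnegrE ?truncn_le ?mulr_ge0.
apply: (@le_trans _ _ (s * D.+1 * (1 + r) ^ D.+1 * Dl ^ D.+1)%N%:R).
  rewrite ler_nat (leq_trans (nqueries_tester _ _ _ _ _ _ _)) //.
  have := explore_cost_le Dl r D.+1; rewrite expnMn; nia.
by rewrite natrM natrX -mulrA -exprMn ler_wpM2l.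
Qed.

Theorem proposition4p6 (R : realType) (eps : R) (heps : 0 < eps)
    (r k : nat) (hr : (0 < r)%N) (F : {set {set 'I_k}})
    (hF : is_rgraph r F) (hconn : hconnected F)
    (D : nat) (hD : is_diameter F D)
    (C : R) (hC : 0 < C) :
  exists K : R, 0 < K /\
    forall (n : nat) (d : R), 0 < d ->
      exists T : qtree n,
        (nqueries T)%:R <= K * d ^+ D.+1 /\
        forall (E : {set {set 'I_n}}) (ord : 'I_n -> seq {set 'I_n}),
          is_rgraph r E -> edge_order E ord ->
          avg_degree R r E = d ->
          (forall v : 'I_n, (vdeg E v)%:R <= C * d) ->
          (F_free F E -> 2%:R / 3%:R <= accept_prob R E ord T) /\
          (forall eps' : R, eps <= eps' -> far_from_free r F E eps' ->
             accept_prob R E ord T <= 1 / 3%:R).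
Proof.
have [hdiam _] := hD.
have hCr : 0 < C * r%:R + eps by rewrite addr_gt0 // mulr_gt0 // ltr0n.
pose p := eps / (2 * (C * r%:R + eps)).
have hp : 0 < p by rewrite divr_gt0 // mulr_gt0.
pose s := (Num.truncn (2 / p)).+1.
exists ((s * D.+1 * (1 + r) ^ D.+1)%N%:R * C ^+ D.+1); split.
  by rewrite mulr_gt0 ?exprn_gt0 // ltr0n !muln_gt0 expn_gt0.
move=> n d hd; pose Dl := Num.truncn (C * d); pose N := (trunc_log 2 n).+1.
have hnN : (n <= 2 ^ N)%N by apply/ltnW/trunc_log_ltn.
exists (tester n Dl r D N F s); split; first by apply: nqueries_tester_le; apply: ltW.
move=> E ord hE hord havg hdegC.
have hdeg v : (vdeg E v <= Dl)%N by rewrite truncn_ge_nat ?hdegC // mulr_ge0 // ltW.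
rewrite accept_prob_tester //; split => [hfree | eps' heps' hfar].
  rewrite (bad_vertices_free _ _ D hord hfree) cards0 mul0r subr0 expr1n.
  by rewrite ler_pdivrMr ?ltr0n // mul1r ler_nat.
set b := #|bad_vertices Dl r D F ord|.
rewrite -havg in hd hdegC; have [hn _ _] := avg_degree_gt0 hd.
have hdense : eps * n%:R <= b%:R * (C * r%:R + eps).
  exact: (bad_vertices_dense hord hE hdeg hr hF hdiam hconn
           (ltW heps) heps' (ltW hC) hd hdegC hfar).
have hM : 0 < (2 ^ N)%:R :> R by rewrite ltr0n expn_gt0.
have hM2n : (2 ^ N)%:R <= 2 * n%:R :> R.
  by rewrite -natrM ler_nat expnS leq_mul2l trunc_logP.
have hpq : p <= b%:R / (2 ^ N)%:R.
  exact: sample_fraction_ge heps (mulr_ge0 (ltW hC) (ler0n _ r)) hM hM2n hdense.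
have hbN : (b <= 2 ^ N)%N.
  by rewrite (leq_trans _ hnN) // -[X in (_ <= X)%N]card_ord max_card.
apply: one_sub_pow_le_third; first by rewrite divr_ge0 //= ler_pdivrMr // mul1r ler_nat.
by apply: lt_le_trans (truncnS_div_mul_gt 2 hp) _; rewrite ler_wpM2l.
Qed.
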